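(* Let $k$ be a field, $t\ge1$, $n_1,\dots,n_t\ge1$, $d\ge2$ integers, and for each $s$ let $I_s=[\alpha_s,\beta_s]\cap\mathbb Z$ be an interval contained in $\{0,1,\dots,n_s\}$. Let $K^{d(I_1,\dots,I_t)}_{n_1,\dots,n_t}$ be the $d(I_1,\dots,I_t)$-complete multipartite hypergraph. Then $R/I(K^{d(I_1,\dots,I_t)}_{n_1,\dots,n_t})$ has a linear resolution, and for $i\ge1$, $\beta_{i,j}(K^{d(I_1,\dots,I_t)}_{n_1,\dots,n_t})\ne0$ only if $j=i+(d-1)$.
   Context: The $d(I_1,\dots,I_t)$-complete multipartite hypergraph has vertex set $B_1\sqcup\cdots\sqcup B_t$ (pairwise disjoint, $|B_s|=n_s$) and as edges all $d$-element subsets $E$ such that $|E\cap B_s|\in I_s$ for every $s$. For a hypergraph on a finite set $X$, $R=k[x_v:v\in X]$, the edge ideal $I(\mathcal H)$ is generated by $\prod_{v\in E}x_v$, $E$ an edge, and $\beta_{i,j}(\mathcal H)=\dim_k\mathrm{Tor}^R_i(R/I(\mathcal H),k)_j$. $R/I$ has a linear resolution if there is $c$ with $\beta_{i,j}=0$ for all $i\ge1$ and $j\ne i+c-1$. *)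

From HB Require Import structures.
From mathcomp Require Import all_boot all_order all_algebra.
Set Implicit Arguments. Unset Strict Implicit. Unset Printing Implicit Defensive.
Import GRing.Theory.
Local Open Scope ring_scope.

(* on {set X}.  R = k[x_v : v in X] with the standard grading.               *)
(* Monomials are exponent vectors X -> nat.                                  *)

Section Koszul.
Variables (k : fieldType) (X : finType) (edge : pred {set X}).

(* the monomial x^a (a : X -> nat) lies in the monomial ideal I(H) iff it is
   divisible by prod_{v in E} x_v for some edge E *)
Definition in_edge_ideal (a : X -> nat) : bool :=
  [exists E : {set X}, edge E && [forall v in E, 0 < a v]%N].

(* Graded pieces of the Koszul complex K(x_v : v in X) (x) R/I(H), which
   computes Tor^R_i(R/I(H), k) (the Koszul complex is the minimal free
   resolution of k).  In internal degree j, homological degree i, a k-basis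
   is given by pairs (F, a) with F an i-subset of X (the wedge e_F) and x^a a
   standard monomial (not in I(H)) of degree j - i (a basis of (R/I)_{j-i}).
   Exponents are bounded by j, which is harmless since deg a = j - i <= j. *)
Definition kbasis_type (j : nat) := ({set X} * {ffun X -> 'I_j.+1})%type.

Definition kbasis (i j : nat) : {set kbasis_type j} :=
  [set x : kbasis_type j | [&& (i <= j)%N, #|x.1| == i,
               (\sum_(v : X) (x.2 v : nat))%N == (j - i)%N &
               ~~ in_edge_ideal (fun v => x.2 v : nat)]].

(* coefficient of e_G (x) x^b in d(e_F (x) x^a), where
   d(e_F (x) m) = sum_{v in F} (-1)^{#{u in F | u < v}} e_{F \ v} (x) x_v m
   (terms with x_v m in I(H) vanish in R/I(H) and are not basis elements) *)
Definition kcoef (j : nat) (x y : kbasis_type j) : k :=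
  \sum_(v in x.1)
    if (y.1 == x.1 :\ v) &&
       [forall u, (y.2 u : nat) == (x.2 u + (u == v))%N]
    then (-1) ^+ #|[set u in x.1 | (enum_rank u < enum_rank v)%N]|
    else 0.

(* the differential K_i -> K_{i-1} in internal degree j, as a matrix acting on
   row vectors *)
Definition kdiff (i j : nat) : 'M[k]_(#|kbasis i j|, #|kbasis i.-1 j|) :=
  \matrix_(r, c) kcoef (enum_val r) (enum_val c).

(* beta_{i,j} = dim_k Tor_i^R(R/I(H), k)_j = dim (ker d_i / im d_{i+1}),
   for i >= 1 *)
Definition betti (i j : nat) : nat :=
  (\rank (kermx (kdiff i j)) - \rank (kdiff i.+1 j))%N.

End Koszul.

Definition linear_resolution (b : nat -> nat -> nat) : Prop :=
  exists c : nat, forall i j : nat, (1 <= i)%N -> j <> (i + c - 1)%N -> b i j = 0%N.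

(* vertex set B_1 |_| ... |_| B_t, |B_s| = n s; a vertex is (s, index in B_s) *)
Definition cmh_vertex (t : nat) (n : 'I_t -> nat) : finType :=
  {s : 'I_t & 'I_(n s)}.

Definition cmh_edge (t : nat) (n : 'I_t -> nat) (alpha beta : 'I_t -> nat)
    (d : nat) : pred {set cmh_vertex n} :=
  fun E => (#|E| == d) &&
    [forall s : 'I_t, (alpha s <= #|[set v in E | tag v == s]| <= beta s)%N].
Arguments cmh_edge [t] n alpha beta d _.

(* beta_{i,j} is the homology of the Koszul complex of R/I in internal degree j,
   whose basis consists of the e_F (x) x^a with |F| = i and x^a a standard
   monomial of degree j - i.  It vanishes as soon as this basis carries a
   complete matching: every element is paired, through a nonzero coefficient of
   the differential, with an element one homological degree up or down, and the
   pairs are triangular for some key, so that the two adjacent differentials have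
   ranks adding up to the size of the basis.

   We pair along a pivot variable v of the content x^a x_F: e_F (x) x^a goes up
   to e_{F+v} (x) x^a / x_v when v is not in F, and down to e_{F-v} (x) x_v x^a
   when it is.  The pivot is a square factor of the content if there is one.
   Otherwise the content is squarefree, every block it meets has a distinguished
   vertex, and the pivot is the distinguished vertex of a block chosen from the
   sizes of the non-distinguished part of supp a, which is the same for both
   members of a pair.  A down-move fails only if supp a + v contains an edge.
   This is impossible when |supp a| <= d - 2, and, by the exchange property of
   the edges of the complete multipartite hypergraph, also when |supp a| >= d;
   so matching fails only when j - i = |supp a| = d - 1. *)

From HB Require Import structures.
From mathcomp Require Import all_boot all_order all_algebra zify.
Set Implicit Arguments. Unset Strict Implicit. Unset Printing Implicit Defensive.
Import GRing.Theory.
Local Open Scope ring_scope.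

Lemma card_le_mxrank_triangular (k : fieldType) (m n : nat) (M : 'M[k]_(m, n))
    (I : finType) (f : I -> 'I_m) (g : I -> 'I_n) (key : I -> nat) :
  (forall x, M (f x) (g x) != 0) ->
  (forall x y, M (f x) (g y) != 0 -> x = y \/ (key x < key y)%N) ->
  (#|I| <= \rank M)%N.
Proof.
move=> Mdiag Mtri.
pose N : 'M[k]_#|I| := mxsub (f \o enum_val) (g \o enum_val) M.
have freeN : row_free N.
  apply: inj_row_free => u uN0; apply/rowP => b0; rewrite mxE.
  apply/eqP; apply: contraT => ub0.
  (* at the nonzero coordinate of u of least key, u *m N only sees the
     diagonal entry *)
  have [b ub bmin] :=
    @arg_minnP _ b0 (fun b => u 0 b != 0) (fun b => key (enum_val b)) ub0.
  have : (u *m N) 0 b = u 0 b * N b b.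
    rewrite [LHS]mxE (bigD1 b) //= big1 ?addr0 // => a ab.
    have [->|ua] := eqVneq (u 0 a) 0; first by rewrite mul0r.
    rewrite mxE /=.
    have [-> | /Mtri[/enum_val_inj eab | lt_ab]] :=
      eqVneq (M (f (enum_val a)) (g (enum_val b))) 0; first by rewrite mulr0.
    - by rewrite eab eqxx in ab.
    - by have := bmin a ua; rewrite leqNgt lt_ab.
  rewrite uN0 mxE => /esym/eqP; rewrite mulf_eq0 (negbTE ub) mxE /=.
  by rewrite (negbTE (Mdiag _)).
rewrite -(eqP freeN).
have -> : N = rowsub (f \o enum_val) 1%:M *m colsub (g \o enum_val) M.
  by rewrite -mxsub_mul mul1mx.
apply: leq_trans (mxrankM_maxr _ _) _.
rewrite -[M in mxsub _ _ M]mulmx1 mxsub_mul.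
by apply: leq_trans (mxrankM_maxl _ _) _; rewrite mxsub_id.
Qed.

Lemma card_le_mxrank_enum (k : fieldType) (T1 T2 : finType) (A : {set T1})
    (B : {set T2}) (c : T1 -> T2 -> k) (I : finType) (P : pred I)
    (f : I -> T1) (g : I -> T2) (key : I -> nat) :
  {in P, forall x, f x \in A} -> {in P, forall x, g x \in B} ->
  {in P, forall x, c (f x) (g x) != 0} ->
  {in P &, forall x y, c (f x) (g y) != 0 -> x = y \/ (key x < key y)%N} ->
  (#|P| <= \rank (\matrix_(r < #|A|, s < #|B|) c (enum_val r) (enum_val s)))%N.
Proof.
move=> fA gB cdiag ctri.
have [x0 Px0 | P0] := pickP P; last by rewrite eq_card0.
have [A0 B0] := (fA x0 Px0, gB x0 Px0).
rewrite -card_sig.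
apply: (@card_le_mxrank_triangular _ _ _ _ _
  (fun x => enum_rank_in A0 (f (val x))) (fun x => enum_rank_in B0 (g (val x)))
  (fun x => key (val x))) => [x | x y]; rewrite mxE !enum_rankK_in ?fA ?gB //;
  try exact: valP.
- exact/cdiag/valP.
- by case/ctri; [exact: valP | exact: valP | move/val_inj; left | right].
Qed.

Section Koszul.
Variables (k : fieldType) (X : finType) (edge : pred {set X}).

Definition independent (G : {set X}) := [forall E, edge E ==> ~~ (E \subset G)].

Lemma in_edge_idealE (a : X -> nat) :
  in_edge_ideal edge a = ~~ independent [set u | 0 < a u]%N.
Proof.
rewrite negb_forall; apply: eq_existsb => E; rewrite negb_imply negbK.
by congr (_ && _); apply/forall_inP/subsetP => aE u /aE; rewrite inE.
Qed.

Lemma eq_in_edge_ideal (a b : X -> nat) : (forall u, (0 < a u) = (0 < b u))%N ->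
  in_edge_ideal edge a = in_edge_ideal edge b.
Proof.
move=> ab; rewrite !in_edge_idealE; congr (~~ independent _).
by apply/setP => u; rewrite !inE ab.
Qed.

Lemma independentS (G H : {set X}) :
  H \subset G -> independent G -> independent H.
Proof.
move=> HG /forallP indG; apply/forallP => E; apply/implyP => /(implyP (indG E)).
by apply: contra => EH; apply: subset_trans HG.
Qed.

Variable j : nat.
Local Notation T := (kbasis_type X j).
Local Notation K := (kbasis edge).

Lemma kbasisP i (x : T) :
  reflect [/\ (i <= j)%N, #|x.1| = i, (\sum_u (x.2 u : nat))%N = (j - i)%N &
              ~~ in_edge_ideal edge (fun u => x.2 u : nat)]
          (x \in K i j).
Proof.
by rewrite inE; apply: (iffP and4P) => [[? /eqP ? /eqP ? ?] | [? -> -> ?]].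
Qed.

Definition kface (v : X) (x y : T) : Prop :=
  [/\ v \in x.1, y.1 = x.1 :\ v & forall u, (y.2 u : nat) = (x.2 u + (u == v))%N].

Lemma kcoef_neq0P (x y : T) : kcoef k x y != 0 <-> exists v, kface v x y.
Proof.
split=> [nz | [v [vx y1 y2]]].
  have [/exists_inP[v vx /andP[/eqP y1 /forallP y2]] | noface] := boolP
      [exists v in x.1, (y.1 == x.1 :\ v) &&
                        [forall u, (y.2 u : nat) == (x.2 u + (u == v))%N]].
    by exists v; split=> // u; apply/eqP.
  move: nz; rewrite /kcoef big1 ?eqxx // => v vx; case: ifP => // face.
  by case/negP: noface; apply/exists_inP; exists v.
rewrite /kcoef (bigD1 v) //= big1 ?addr0.
  have -> : [forall u, (y.2 u : nat) == (x.2 u + (u == v))%N].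
    by apply/forallP => u; rewrite y2.
  by rewrite y1 eqxx signr_eq0.
move=> w /andP[wx wv]; case: ifP => // /andP[/eqP yw _].
have : v \in y.1 by rewrite yw !inE eq_sym wv.
by rewrite y1 setD11.
Qed.

Definition kcontent (x : T) : {ffun X -> nat} :=
  [ffun u => (x.2 u + (u \in x.1))%N].

Lemma kcontent_kcoef (x y : T) : kcoef k x y != 0 -> kcontent y = kcontent x.
Proof.
case/kcoef_neq0P => v [vx y1 y2]; apply/ffunP => u; rewrite !ffunE y2 y1 !inE.
by case: eqVneq => [->|]; rewrite ?vx ?addn0 ?addn1 ?addnS.
Qed.

Section Matching.
Variables (i : nat) (up down : pred T) (rise fall : T -> T) (key : T -> nat).
Hypothesis matched : {in K i j, forall x, up x || down x}.
Hypothesis rise_kbasis : {in K i j, forall x, up x -> rise x \in K i.+1 j}.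
Hypothesis fall_kbasis : {in K i j, forall x, down x -> fall x \in K i.-1 j}.
Hypothesis kcoef_rise : {in K i j, forall x, up x -> kcoef k (rise x) x != 0}.
Hypothesis kcoef_fall : {in K i j, forall x, down x -> kcoef k x (fall x) != 0}.
Hypothesis rise_triangular : {in K i j &, forall x y, up x -> up y ->
  kcoef k (rise x) y != 0 -> x = y \/ (key x < key y)%N}.
Hypothesis fall_triangular : {in K i j &, forall x y, down x -> down y ->
  kcoef k x (fall y) != 0 -> x = y \/ (key x < key y)%N}.

Lemma betti_eq0_matching : betti k edge i j = 0%N.
Proof.
have rank_rise : (#|[pred x in K i j | up x]| <= \rank (kdiff k edge i.+1 j))%N.
  apply: (card_le_mxrank_enum (f := rise) (g := id) (key := key)).
  - by move=> x /andP[Kx upx]; apply: rise_kbasis.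
  - by move=> x /andP[].
  - by move=> x /andP[Kx upx]; apply: kcoef_rise.
  - by move=> x y /andP[Kx upx] /andP[Ky upy]; apply: rise_triangular.
have rank_fall : (#|[pred x in K i j | down x]| <= \rank (kdiff k edge i j))%N.
  apply: (card_le_mxrank_enum (f := id) (g := fall) (key := key)).
  - by move=> x /andP[].
  - by move=> x /andP[Kx downx]; apply: fall_kbasis.
  - by move=> x /andP[Kx downx]; apply: kcoef_fall.
  - by move=> x y /andP[Kx downx] /andP[Ky downy]; apply: fall_triangular.
have cover : (#|K i j| <= #|[pred x in K i j | up x]| +
                          #|[pred x in K i j | down x]|)%N.
  rewrite -cardUI; apply: leq_trans (leq_addr _ _).
  apply: subset_leq_card; apply/subsetP => x Kx.
  by move: Kx (matched Kx); rewrite !inE => -> /orP[] ->; rewrite ?orbT.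
rewrite /betti mxrank_ker; apply/eqP; rewrite subn_eq0 leq_subLR.
by apply: leq_trans cover _; rewrite addnC leq_add.
Qed.

End Matching.
End Koszul.

Section Multipartite.
Variables (t : nat) (n : 'I_t -> nat) (alpha beta : 'I_t -> nat) (d : nat).
Local Notation X := (cmh_vertex n).
Local Notation edge := (cmh_edge n alpha beta d).

Definition block (S : {set X}) (s : 'I_t) := [set w in S | tag w == s].

Lemma card_block (S : {set X}) : #|S| = (\sum_s #|block S s|)%N.
Proof.
rewrite -sum1_card (partition_big (fun w : X => tag w) xpredT) //=.
by apply: eq_bigr => s _; rewrite -sum1_card; apply: eq_bigl => w; rewrite !inE.
Qed.

Lemma blockS (S S' : {set X}) s : S \subset S' -> block S s \subset block S' s.
Proof. by move=> SS'; apply/subsetP => w; rewrite !inE => /andP[/(subsetP SS') -> ->]. Qed.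

Lemma cmh_edgeE (E : {set X}) :
  edge E = (#|E| == d) && [forall s, alpha s <= #|block E s| <= beta s]%N.
Proof. by []. Qed.

Lemma card_block_exchange (E : {set X}) u v s : v \in E -> u \notin E ->
  (#|block (u |: (E :\ v)) s| + (tag v == s) = #|block E s| + (tag u == s))%N.
Proof.
move=> vE uE.
have EvE : block (E :\ v) s = block E s :\ v by apply/setP => w; rewrite !inE andbA.
have cardE : #|block E s| = ((tag v == s) + #|block E s :\ v|)%N.
  by rewrite (cardsD1 v (block E s)) !inE vE.
have [us|us] := boolP (tag u == s).
  have -> : block (u |: (E :\ v)) s = u |: block (E :\ v) s.
    by apply/setP => w; rewrite !inE; case: eqVneq => [->|].
  rewrite cardsU1 EvE !inE (negbTE uE) andbF /= cardE; case: (tag v == s) => /=; lia.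
have -> : block (u |: (E :\ v)) s = block (E :\ v) s.
  apply/setP => w; rewrite !inE; case: eqVneq => [->|] //=.
  by rewrite (negbTE us) (negbTE uE) !andbF.
rewrite EvE cardE; case: (tag v == s) => /=; lia.
Qed.

Lemma cmh_edge_exchange (E : {set X}) u v : edge E -> v \in E -> u \notin E ->
  tag u = tag v \/
    (alpha (tag v) < #|block E (tag v)| /\ #|block E (tag u)| < beta (tag u))%N ->
  edge (u |: (E :\ v)).
Proof.
rewrite !cmh_edgeE => /andP[/eqP Ed /forallP Es] vE uE exch.
have -> : #|u |: (E :\ v)| = #|E|.
  by rewrite cardsU1 [#|E|](cardsD1 v) vE !inE (negbTE uE) andbF.
rewrite Ed eqxx /=.
apply/forallP => s; have := card_block_exchange s vE uE; have := Es s.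
case: exch => [-> | []]; first by move=> + /eqP; rewrite eqn_add2r => + /eqP ->.
by case: eqVneq => [<-|_]; case: eqVneq => [<-|_] /=; lia.
Qed.

Lemma cmh_independent_small (G : {set X}) : (#|G| < d)%N -> independent edge G.
Proof.
move=> Gd; apply/forallP => E; apply/implyP; rewrite cmh_edgeE => /andP[/eqP Ed _].
by apply/negP => /subset_leq_card; rewrite Ed leqNgt Gd.
Qed.

Section PickBlock.
(* dv r is the distinguished vertex of block r, or None if there is none. *)
Variable dv : 'I_t -> option X.

Definition pick_block (B : {set X}) : option 'I_t :=
  if [pick r | (dv r != None) &&
               ~~ (alpha r <= #|block B r|.+1 <= beta r)%N] is Some r then Some r
  else if [pick r | (dv r != None) && (alpha r <= #|block B r|)%N] is Some r
  then Some r
  else [pick r | dv r != None].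

Lemma pick_blockP B r : pick_block B = Some r ->
  dv r != None /\
  [\/ ~~ (alpha r <= #|block B r|.+1 <= beta r)%N,
      (alpha r <= #|block B r|)%N /\
        (forall s, dv s != None -> alpha s <= #|block B s|.+1 <= beta s)%N |
      forall s, dv s != None -> #|block B s|.+1 = alpha s].
Proof.
rewrite /pick_block; case: pickP => [r1 /andP[r1dv r1B] [<-] | out].
  by split=> //; constructor 1.
have inr s : dv s != None -> (alpha s <= #|block B s|.+1 <= beta s)%N.
  by have := out s; rewrite /= => + sdv; rewrite sdv /= => /negbFE.
case: pickP => [r2 /andP[r2dv r2B] [<-] | low]; first by split=> //; constructor 2.
case: pickP => [r3 r3dv [<-] | //]; split=> //; constructor 3 => s sdv.
have := low s; rewrite /= sdv /= => /negbT; rewrite -ltnNge => lt_s.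
by have /andP[lo _] := inr s sdv; apply/eqP; rewrite eqn_leq lt_s lo.
Qed.

Lemma pick_block_neq0 B : (exists r, dv r != None) -> pick_block B != None.
Proof.
case=> r rdv; rewrite /pick_block; do 2 case: pickP => [//|_].
by case: pickP => [//|/(_ r)]; rewrite rdv.
Qed.

End PickBlock.

Section Independence.
Variables (dv : 'I_t -> option X) (W : {set X}).
Hypothesis dv_in : forall r u, dv r = Some u -> u \in W /\ tag u = r.
Hypothesis dv_cover : forall u, u \in W -> dv (tag u) != None.

Definition distinguished := [set u in W | dv (tag u) == Some u].

(* E is an edge that adding v would create in G; every case of pick_block
   refutes it. *)
Section Violation.
Variables (G E : {set X}) (r : 'I_t) (v : X).
Let B := G :\: distinguished.
Hypotheses (GW : G \subset W) (pick_r : pick_block dv B = Some r).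
Hypotheses (dv_r : dv r = Some v) (vG : v \notin G).
Hypotheses (indG : independent edge G) (dG : (d <= #|G|)%N).
Hypotheses (edgeE : edge E) (EvG : E \subset v |: G).

Let tag_v : tag v = r. Proof. by have [] := dv_in dv_r. Qed.

Lemma edge_notin_independent (F : {set X}) : edge F -> F \subset G -> False.
Proof. by move=> edgeF FG; move/forallP/(_ F): indG; rewrite edgeF FG. Qed.

Let vE : v \in E.
Proof.
apply/negPn/negP => vNE; apply: (edge_notin_independent edgeE).
by apply/subsetP => w wE; move: (subsetP EvG w wE); rewrite !inE;
   case: eqVneq wE => // ->; rewrite (negbTE vNE).
Qed.

Let EvG' : E :\ v \subset G.
Proof. by rewrite subDset. Qed.

Lemma no_exchange u : u \in G -> u \notin E ->
  tag u = r \/ (alpha r < #|block E r| /\ #|block E (tag u)| < beta (tag u))%N ->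
  False.
Proof.
move=> uG uE exch; apply: (@edge_notin_independent (u |: (E :\ v))).
  by apply: cmh_edge_exchange; rewrite ?tag_v.
by rewrite subUset sub1set uG EvG'.
Qed.

Lemma block_G_none s : dv s = None -> block G s = set0.
Proof.
move=> dv_s; apply/setP => u; rewrite !inE; apply/negP => /andP[uG /eqP us].
by have := dv_cover (subsetP GW u uG); rewrite us dv_s.
Qed.

Lemma block_G_sub s w : dv s = Some w -> block G s \subset w |: block B s.
Proof.
move=> dv_s; apply/subsetP => u; rewrite !inE => /andP[uG /eqP us].
rewrite uG us eqxx (subsetP GW u uG) !andbT /= dv_s orbC -implyNb negbK.
by apply/implyP => /eqP[->].
Qed.

Lemma card_block_G s : (#|block G s| <= #|block B s|.+1)%N.
Proof.
case dv_s: (dv s) => [w|]; last by rewrite block_G_none ?cards0.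
apply: leq_trans (subset_leq_card (block_G_sub dv_s)) _.
by rewrite cardsU1 -addn1 addnC leq_add2l leq_b1.
Qed.

Lemma block_G_r : block G r = block B r.
Proof.
apply/eqP; rewrite eqEsubset (@blockS B G r (subsetDl _ _)) andbT.
apply/subsetP => u uG; move: (subsetP (block_G_sub dv_r) u uG); rewrite in_setU1.
by case/orP => [/eqP eu | //]; move: uG; rewrite eu inE (negbTE vG).
Qed.

Lemma block_E_r : block E r = v |: block G r.
Proof.
apply/eqP; rewrite eqEsubset; apply/andP; split.
  apply/subsetP => u; rewrite !inE => /andP[uE ->]; rewrite andbT.
  by move: (subsetP EvG u uE); rewrite !inE.
rewrite subUset sub1set inE vE tag_v eqxx /=.
apply/subsetP => u; rewrite !inE => /andP[uG /eqP ur]; rewrite ur eqxx andbT.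
by apply/negPn/negP => uE; apply: (no_exchange uG uE); left.
Qed.

Lemma card_block_E_r : #|block E r| = #|block B r|.+1.
Proof. by rewrite block_E_r cardsU1 {2}block_G_r !inE (negbTE vG). Qed.

Lemma exists_G_notin_E : exists2 u, u \in G & u \notin E.
Proof.
apply/exists_inP; apply: contraT; rewrite negb_exists_in => /forall_inP GE.
have GEv : G \subset E :\ v.
  apply/subsetP => u uG; rewrite in_setD1 (negbNE (GE u uG)) andbT.
  by apply: contraNneq vG => <-.
have := edgeE; rewrite cmh_edgeE (cardsD1 v) vE => /andP[/eqP dE _].
by have := leq_trans dG (subset_leq_card GEv); rewrite -dE add1n ltnn.
Qed.

Lemma in_range_r : (alpha r <= #|block B r|.+1 <= beta r)%N.
Proof. by move: edgeE; rewrite cmh_edgeE -card_block_E_r => /andP[_ /forallP]. Qed.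

Lemma above_alpha_contra : (alpha r <= #|block B r|)%N ->
  (forall s, dv s != None -> alpha s <= #|block B s|.+1 <= beta s)%N -> False.
Proof.
move=> alpha_r inr; have [u uG uE] := exists_G_notin_E.
have ur : tag u != r.
  apply: contraNneq uE => ur.
  have : u \in block E r by rewrite block_E_r in_setU1 inE uG ur eqxx orbT.
  by rewrite inE => /andP[].
have EsG : block E (tag u) \subset block G (tag u) :\ u.
  apply/subsetP => w; rewrite !inE => /andP[wE /eqP wu].
  rewrite wu eqxx andbT; apply/andP; split; first by apply: contraNneq uE => <-.
  apply: (subsetP EvG'); rewrite in_setD1 wE andbT.
  by apply: contraNneq ur => wv; rewrite -wu wv tag_v.
have ltEG : (#|block E (tag u)| < #|block G (tag u)|)%N.
  by rewrite (cardsD1 u (block G (tag u))) inE uG eqxx add1n ltnS subset_leq_card.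
apply: (no_exchange uG uE); right; split; first by rewrite card_block_E_r ltnS.
have /andP[_ beta_u] := inr _ (dv_cover (subsetP GW u uG)).
exact: leq_trans ltEG (leq_trans (card_block_G _) beta_u).
Qed.

Lemma alpha_tight_contra :
  (forall s, dv s != None -> #|block B s|.+1 = alpha s) -> False.
Proof.
move=> tight.
have blockE s : (#|block G s| + (s == r) <= #|block E s|)%N.
  move: edgeE; rewrite cmh_edgeE => /andP[_ /forallP/(_ s)/andP[alpha_s _]].
  apply: leq_trans alpha_s.
  case dv_s: (dv s) => [w|].
    rewrite -tight ?dv_s //; case: eqVneq => [->|_]; first by rewrite block_G_r addn1.
    by rewrite addn0 card_block_G.
  have sr : s != r by apply/eqP => sr; rewrite sr dv_r in dv_s.
  by rewrite block_G_none // cards0 (negbTE sr).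
have := @leq_sum _ (index_enum 'I_t) xpredT _ _ (fun s _ => blockE s).
rewrite big_split /= -!card_block (bigD1 r) //= eqxx big1 => [|s /negbTE -> //].
move: edgeE; rewrite cmh_edgeE => /andP[/eqP -> _].
by rewrite addn0 addn1 => lt_Gd; have := leq_trans lt_Gd dG; rewrite ltnn.
Qed.

End Violation.

Lemma independent_setU1 (G : {set X}) r v :
  G \subset W -> pick_block dv (G :\: distinguished) = Some r -> dv r = Some v ->
  v \notin G -> independent edge G -> (d <= #|G|)%N -> independent edge (v |: G).
Proof.
move=> GW pick_r dv_r vG indG dG; apply/forallP => E; apply/implyP => edgeE.
apply/negP => EvG; have [_ [out | [alpha_r inr] | tight]] := pick_blockP pick_r.
- by apply: (negP out); eapply in_range_r; eassumption.
- by eapply above_alpha_contra; eassumption.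
- by eapply alpha_tight_contra; eassumption.
Qed.

End Independence.
End Multipartite.

Section CmhMatching.
Variables (t : nat) (n : 'I_t -> nat) (alpha beta : 'I_t -> nat) (d j : nat).
Local Notation X := (cmh_vertex n).
Local Notation edge := (cmh_edge n alpha beta d).
Local Notation T := (kbasis_type X j).
Local Notation K := (kbasis edge).

Definition square_var (c : {ffun X -> nat}) := [pick u | 1 < c u]%N.
Definition block_rep (c : {ffun X -> nat}) (r : 'I_t) :=
  [pick u | (0 < c u)%N && (tag u == r)].
Definition content_supp (c : {ffun X -> nat}) := [set u | 0 < c u]%N.
Definition distinguished_of (c : {ffun X -> nat}) :=
  distinguished (block_rep c) (content_supp c).

Definition mono_supp (x : T) := [set u | 0 < x.2 u]%N.
Definition free_part (x : T) := mono_supp x :\: distinguished_of (kcontent x).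
Definition key (x : T) := #|free_part x|.

Definition pivot (x : T) : option X :=
  if square_var (kcontent x) is Some v then Some v
  else obind (block_rep (kcontent x))
             (pick_block alpha beta (block_rep (kcontent x)) (free_part x)).

Definition upward (x : T) :=
  if pivot x is Some v then v \notin x.1 else false.
Definition downward (x : T) :=
  if pivot x is Some v then
    (v \in x.1) && ~~ in_edge_ideal edge (fun u => x.2 u + (u == v))%N
  else false.

Definition kup (x : T) : T :=
  if pivot x is Some v then (v |: x.1, [ffun u => inord (x.2 u - (u == v))])
  else x.
Definition kdown (x : T) : T :=
  if pivot x is Some v then (x.1 :\ v, [ffun u => inord (x.2 u + (u == v))])
  else x.

Lemma kcontentE (x : T) u : kcontent x u = (x.2 u + (u \in x.1))%N.
Proof. by rewrite ffunE. Qed.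

Lemma block_repP (c : {ffun X -> nat}) r u :
  block_rep c r = Some u -> (0 < c u)%N /\ tag u = r.
Proof. by rewrite /block_rep; case: pickP => // w /andP[w_gt0 /eqP wr] [<-]. Qed.

Lemma block_rep_neq0 (c : {ffun X -> nat}) u : (0 < c u)%N -> block_rep c (tag u) != None.
Proof. by move=> u_gt0; rewrite /block_rep; case: pickP => // /(_ u); rewrite u_gt0 eqxx. Qed.

Lemma square_var_None (c : {ffun X -> nat}) u : square_var c = None -> (c u <= 1)%N.
Proof. by rewrite /square_var; case: pickP => // c1 _; rewrite leqNgt c1. Qed.

Lemma square_var_Some (c : {ffun X -> nat}) v : square_var c = Some v -> (1 < c v)%N.
Proof. by rewrite /square_var; case: pickP => // w w_gt1 [<-]. Qed.

Lemma squarefree_exp0 (x : T) u :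
  square_var (kcontent x) = None -> u \in x.1 -> x.2 u = 0 :> nat.
Proof.
move=> /(square_var_None u); rewrite kcontentE => + ux.
by rewrite ux addn1 ltnS leqn0 => /eqP.
Qed.

Lemma pivot_content_gt0 (x : T) v : pivot x = Some v -> (0 < kcontent x v)%N.
Proof.
rewrite /pivot; case sq: (square_var _) => [w|].
  by move=> [<-]; apply: leq_trans (square_var_Some sq).
by case: (pick_block _ _ _ _) => //= r /block_repP[].
Qed.

Lemma pivot_distinguished (x : T) v : square_var (kcontent x) = None ->
  pivot x = Some v -> v \in distinguished_of (kcontent x).
Proof.
rewrite /pivot => ->; case: (pick_block _ _ _ _) => //= r rep_r.
have [v_gt0 vr] := block_repP rep_r.
by rewrite !inE v_gt0 vr rep_r eqxx.
Qed.

Lemma kbasis_exp_le i (x : T) u : x \in K i j -> (x.2 u <= j - i)%N.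
Proof. by case/kbasisP => _ _ <- _; rewrite (bigD1 u) //= leq_addr. Qed.

Lemma kup_set (x : T) v : pivot x = Some v -> (kup x).1 = v |: x.1.
Proof. by rewrite /kup => ->. Qed.

Lemma kup_exp (x : T) v u : pivot x = Some v ->
  ((kup x).2 u : nat) = (x.2 u - (u == v))%N.
Proof.
rewrite /kup => -> /=; rewrite ffunE inordK //.
exact: leq_ltn_trans (leq_subr _ _) (ltn_ord _).
Qed.

Lemma kdown_set (x : T) v : pivot x = Some v -> (kdown x).1 = x.1 :\ v.
Proof. by rewrite /kdown => ->. Qed.

(* Exponents are stored in 'I_j.+1; x.2 u + 1 <= j - i + 1 fits only if 1 <= i. *)
Lemma kdown_exp i (x : T) v u : (1 <= i)%N -> x \in K i j -> pivot x = Some v ->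
  ((kdown x).2 u : nat) = (x.2 u + (u == v))%N.
Proof.
move=> i_gt0 Kx; rewrite /kdown => -> /=; rewrite ffunE inordK //.
have /kbasisP[ij _ _ _] := Kx; have := kbasis_exp_le u Kx.
by case: (u == v) => /=; lia.
Qed.

Lemma upward_exp_gt0 (x : T) v : pivot x = Some v -> v \notin x.1 -> (0 < x.2 v)%N.
Proof. by move=> /pivot_content_gt0; rewrite kcontentE => + /negbTE vx; rewrite vx addn0. Qed.

Lemma kup_kbasis i (x : T) : x \in K i j -> upward x -> kup x \in K i.+1 j.
Proof.
rewrite /upward; case piv: (pivot x) => [v|] // Kx vx.
have v_gt0 := upward_exp_gt0 piv vx.
have /kbasisP[_ cardx sumx stdx] := Kx.
have sum_exp : (\sum_u (x.2 u : nat) = x.2 v + \sum_(u | u != v) x.2 u)%N.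
  by rewrite (bigD1 v).
apply/kbasisP; split; rewrite ?(kup_set piv).
- by rewrite -subn_gt0 -sumx sum_exp ltn_addr.
- by rewrite cardsU1 vx cardx.
- rewrite (bigD1 v) //= (kup_exp _ piv) eqxx subn1.
  rewrite (eq_bigr (fun u => x.2 u : nat)) => [|u /negbTE uv]; last first.
    by rewrite (kup_exp _ piv) uv subn0.
  by move: sumx; rewrite sum_exp subnS => <-; move: v_gt0; case: (x.2 v : nat).
- rewrite in_edge_idealE negbK in stdx; rewrite in_edge_idealE negbK.
  apply: (independentS _ stdx).
  apply/subsetP => u; rewrite !inE (kup_exp _ piv) => /leq_trans; apply.
  exact: leq_subr.
Qed.

Lemma kdown_kbasis i (x : T) :
  (1 <= i)%N -> x \in K i j -> downward x -> kdown x \in K i.-1 j.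
Proof.
rewrite /downward; case piv: (pivot x) => [v|] // i_gt0 Kx /andP[vx stdv].
have /kbasisP[ij cardx sumx _] := Kx.
apply/kbasisP; split; rewrite ?(kdown_set piv).
- exact: leq_trans (leq_pred i) ij.
- by move: cardx; rewrite (cardsD1 v x.1) vx add1n => <-.
- rewrite (eq_bigr (fun u => x.2 u + (u == v))%N) => [|u _]; last first.
    exact: kdown_exp _ i_gt0 Kx piv.
  rewrite big_split /= sumx (bigD1 v) //= eqxx big1 => [|u /negbTE -> //].
  by move: i_gt0 ij; lia.
- rewrite (@eq_in_edge_ideal _ _ _ (fun u => x.2 u + (u == v))%N) // => u.
  by rewrite (kdown_exp _ i_gt0 Kx piv).
Qed.

Variable k : fieldType.

Lemma kcoef_kup (x : T) : upward x -> kcoef k (kup x) x != 0.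
Proof.
rewrite /upward; case piv: (pivot x) => [v|] // vx.
have v_gt0 := upward_exp_gt0 piv vx.
apply/kcoef_neq0P; exists v; split; rewrite ?(kup_set piv) ?setU11 ?setU1K //.
move=> u; rewrite (kup_exp _ piv); case: eqVneq => [->|_]; last by rewrite subn0 addn0.
by rewrite subn1 addn1 prednK.
Qed.

Lemma kcoef_kdown i (x : T) :
  (1 <= i)%N -> x \in K i j -> downward x -> kcoef k x (kdown x) != 0.
Proof.
rewrite /downward; case piv: (pivot x) => [v|] // i_gt0 Kx /andP[vx _].
apply/kcoef_neq0P; exists v; split; rewrite ?(kdown_set piv) //.
by move=> u; rewrite (kdown_exp _ i_gt0 Kx piv).
Qed.

Lemma eq_kbasis_type (x y : T) :
  x.1 = y.1 -> (forall u, (x.2 u : nat) = y.2 u) -> x = y.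
Proof.
case: x y => [F a] [G b] /= -> ab; congr pair.
by apply/ffunP => u; apply/val_inj; exact: ab.
Qed.

(* Along a pair, free_part either stays the same, and then so does the pivot,
   or gains the vertex w moved into the monomial. *)
Lemma pivot_or_key_lt (x y : T) w :
  square_var (kcontent x) = None -> kcontent y = kcontent x ->
  x.2 w = 0 :> nat -> (0 < y.2 w)%N ->
  (forall u, u \notin distinguished_of (kcontent x) -> u != w ->
     (0 < y.2 u) = (0 < x.2 u))%N ->
  pivot y = pivot x \/ (key x < key y)%N.
Proof.
move=> sq cyx xw0 yw_gt0 same; set V := distinguished_of (kcontent x) in same *.
have free_y : free_part y = if w \in V then free_part x else w |: free_part x.
  rewrite /free_part /mono_supp cyx -/V; clearbody V; apply/setP => u.
  have [wV|wV] := boolP (w \in V); rewrite !inE.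
    have [uV|uV] := boolP (u \in V) => //=.
    by rewrite same //; apply: contraNneq uV => ->.
  have [->|uw] := eqVneq u w; first by rewrite wV yw_gt0.
  by have [uV|uV] := boolP (u \in V) => //=; rewrite same.
case: ifP free_y => wV free_y; first by left; rewrite /pivot cyx free_y.
right; rewrite /key free_y cardsU1.
suff -> : w \notin free_part x by rewrite add1n.
by rewrite /free_part /mono_supp !inE xw0 andbF.
Qed.

Lemma kup_triangular (x y : T) : upward x -> upward y ->
  kcoef k (kup x) y != 0 -> x = y \/ (key x < key y)%N.
Proof.
move=> upx upy nz.
have cyx : kcontent y = kcontent x.
  by rewrite (kcontent_kcoef nz) (kcontent_kcoef (kcoef_kup upx)).
move: upx upy; rewrite /upward.
case pivx: (pivot x) => [v|] // vx; case pivy: (pivot y) => [v'|] // vy.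
case/kcoef_neq0P: nz => w []; rewrite (kup_set pivx) => wx y1 y2.
have [wv | wv] := eqVneq w v.
  left; apply: eq_kbasis_type; first by rewrite y1 wv setU1K.
  move=> u; rewrite y2 (kup_exp _ pivx) wv.
  case: eqVneq => [->|_]; last by rewrite subn0 addn0.
  by rewrite subn1 addn1 prednK // (upward_exp_gt0 pivx vx).
have vy1 : v \in y.1 by rewrite y1 !inE eqxx orTb andbT eq_sym.
have [piv_eq | //] : pivot y = pivot x \/ (key x < key y)%N; last by right.
  case sq: (square_var (kcontent x)) => [s|]; first by left; rewrite /pivot cyx sq.
  have wx' : w \in x.1 by move: wx; rewrite !inE (negbTE wv).
  apply: (pivot_or_key_lt (w := w)) => //.
  - exact: squarefree_exp0.
  - by rewrite y2 (kup_exp _ pivx) eqxx addn1.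
  - move=> u uV uw; rewrite y2 (kup_exp _ pivx) (negbTE uw) addn0.
    have /negbTE -> : u != v.
      by apply: contraNneq uV => ->; apply: pivot_distinguished sq pivx.
    by rewrite subn0.
have v'v : v' = v by move: piv_eq; rewrite pivy pivx => -[].
by subst v'; rewrite vy1 in vy.
Qed.

Lemma kdown_triangular i (x y : T) : (1 <= i)%N -> y \in K i j ->
  downward x -> downward y -> kcoef k x (kdown y) != 0 ->
  x = y \/ (key x < key y)%N.
Proof.
move=> i_gt0 Ky downx downy nz.
have cyx : kcontent y = kcontent x.
  by rewrite -(kcontent_kcoef (kcoef_kdown i_gt0 Ky downy)) (kcontent_kcoef nz).
move: downx downy; rewrite /downward.
case pivx: (pivot x) => [v|] // /andP[vx _].
case pivy: (pivot y) => [v'|] // /andP[vy _].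
case/kcoef_neq0P: nz => w [wx]; rewrite (kdown_set pivy) => y1 y2.
have y2' u : (y.2 u + (u == v') = x.2 u + (u == w))%N.
  by rewrite -y2 (kdown_exp _ i_gt0 Ky pivy).
have [wv | wv] := eqVneq w v'.
  left; apply: eq_kbasis_type; first by rewrite -(setD1K vy) y1 -wv setD1K.
  by move=> u; apply/eqP; rewrite -(eqn_add2r (u == v')) y2' wv.
have [piv_eq | //] : pivot y = pivot x \/ (key x < key y)%N; last by right.
  case sq: (square_var (kcontent x)) => [s|]; first by left; rewrite /pivot cyx sq.
  apply: (pivot_or_key_lt (w := w)) => //.
  - exact: squarefree_exp0.
  - by have := y2' w; rewrite eqxx (negbTE wv) addn0 (squarefree_exp0 sq wx) => ->.
  - move=> u uV uw; have := y2' u; rewrite (negbTE uw) addn0.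
    have /negbTE -> : u != v'.
      apply: contraNneq uV => ->; rewrite -cyx.
      by apply: pivot_distinguished pivy; rewrite cyx.
    by rewrite addn0 => ->.
have v'v : v' = v by move: piv_eq; rewrite pivy pivx => -[].
subst v'; have : v \in x.1 :\ w by rewrite in_setD1 eq_sym wv vx.
by rewrite -y1 setD11.
Qed.

Lemma card_mono_supp (x : T) :
  square_var (kcontent x) = None -> #|mono_supp x| = (\sum_u (x.2 u : nat))%N.
Proof.
move=> sq; rewrite -sum1_card big_mkcond /=; apply: eq_bigr => u _.
have := square_var_None u sq; rewrite kcontentE inE.
by case: (x.2 u : nat) => [|[|?]]; case: (u \in x.1).
Qed.

Lemma upward_or_downward_square (x : T) v : square_var (kcontent x) = Some v ->
  ~~ in_edge_ideal edge (fun u => x.2 u : nat) -> upward x || downward x.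
Proof.
move=> sq stdx; rewrite /upward /downward.
have -> : pivot x = Some v by rewrite /pivot sq.
have [//|/negPn vx] := boolP (v \notin x.1); rewrite vx /=.
have v_gt0 : (0 < x.2 v)%N.
  by have := square_var_Some sq; rewrite kcontentE vx addn1 ltnS.
rewrite (@eq_in_edge_ideal _ _ _ (fun u => x.2 u : nat)) // => u.
by case: eqVneq => [->|_]; rewrite ?addn0 // addn1 v_gt0.
Qed.

Lemma upward_or_downward i (x : T) : (1 <= i)%N -> j != (i + (d - 1))%N ->
  x \in K i j -> upward x || downward x.
Proof.
move=> i_gt0 jd Kx; have /kbasisP[ij cardx sumx stdx] := Kx.
case sq: (square_var (kcontent x)) => [v|]; first exact: upward_or_downward_square sq stdx.
rewrite /upward /downward.
have [u0 u0x] : exists u0, u0 \in x.1 by apply/set0Pn; rewrite -card_gt0 cardx.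
have : pick_block alpha beta (block_rep (kcontent x)) (free_part x) != None.
  apply: pick_block_neq0; exists (tag u0).
  by apply: block_rep_neq0; rewrite kcontentE u0x addn1.
case pick_r: (pick_block _ _ _ _) => [r|] // _.
have [rep_r _] := pick_blockP pick_r.
case rep: (block_rep (kcontent x) r) rep_r => [v|] // _.
have -> : pivot x = Some v by rewrite /pivot sq pick_r /= rep.
have [//|/negPn vx] := boolP (v \notin x.1); rewrite vx /=.
have vG : v \notin mono_supp x by rewrite inE (squarefree_exp0 sq vx).
rewrite in_edge_idealE negbK.
have -> : [set u | 0 < x.2 u + (u == v)]%N = v |: mono_supp x.
  apply/setP => u; rewrite !inE.
  by case: eqVneq => [->|_]; rewrite ?addn0 ?addn1 // (squarefree_exp0 sq vx).
have [dG | Gd] := leqP d #|mono_supp x|.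
  apply: (independent_setU1 (dv := block_rep (kcontent x))
                            (W := content_supp (kcontent x))) => //.
  - by move=> r' u /block_repP[u_gt0 <-]; rewrite inE u_gt0.
  - by move=> u; rewrite inE; exact: block_rep_neq0.
  - apply/subsetP => u; rewrite !inE kcontentE => /leq_trans; apply.
    exact: leq_addr.
  - exact: pick_r.
  - exact: rep.
  - by rewrite in_edge_idealE negbK in stdx.
apply: cmh_independent_small; rewrite cardsU1 vG add1n.
move: jd Gd; rewrite card_mono_supp // sumx; lia.
Qed.

End CmhMatching.

Lemma cmh_betti_eq0 (k : fieldType) (t : nat) (n : 'I_t -> nat)
    (alpha beta : 'I_t -> nat) (d i j : nat) :
  (1 <= i)%N -> j != (i + (d - 1))%N -> betti k (cmh_edge n alpha beta d) i j = 0%N.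
Proof.
move=> i_gt0 jd.
apply: (betti_eq0_matching (up := @upward _ n alpha beta j)
  (down := @downward _ n alpha beta d j) (rise := @kup _ n alpha beta j)
  (fall := @kdown _ n alpha beta j) (key := @key _ n j)).
- by move=> x; apply: upward_or_downward.
- by move=> x; apply: kup_kbasis.
- by move=> x; apply: kdown_kbasis.
- by move=> x _; apply: kcoef_kup.
- by move=> x; apply: kcoef_kdown.
- by move=> x y _ _; apply: kup_triangular.
- by move=> x y _ Ky; apply: kdown_triangular Ky.
Qed.

Theorem theorem3p21 (k : fieldType) (t : nat) (n : 'I_t -> nat)
    (alpha beta : 'I_t -> nat) (d : nat) :
  (1 <= t)%N ->
  (forall s : 'I_t, 1 <= n s)%N ->
  (2 <= d)%N ->
  (forall s : 'I_t, alpha s <= beta s <= n s)%N ->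
  linear_resolution (betti k (cmh_edge n alpha beta d)) /\
  (forall i j : nat, (1 <= i)%N ->
     betti k (cmh_edge n alpha beta d) i j <> 0%N -> j = (i + (d - 1))%N).
Proof.
(* The vanishing holds for all t, n, alpha, beta; [2 <= d] only serves to
   write the degree i + (d - 1) as i + d - 1. *)
move=> _ _ d_ge2 _; split.
  exists d => i j i_gt0 jd; apply: cmh_betti_eq0 => //.
  by apply/eqP => ji; apply: jd; move: d_ge2; lia.
move=> i j i_gt0 nz; apply/eqP/negPn/negP => jd.
by apply: nz; apply: cmh_betti_eq0.
Qed.
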